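(* Let $R$ be a commutative ring with identity and $M$ a non-zero comultiplication $R$-module with $G'(M)$ non-null. (i) $G'(M)$ has a pendent vertex (a vertex with exactly one neighbour) if and only if $|\mathrm{Min}(M)|=2$ and $G'(M)$ is the disjoint union of two complete subgraphs $G'_1,G'_2$ with no edges between them such that $|V(G'_i)|=2$ for some $i\in\{1,2\}$. (ii) $G'(M)$ is not a star graph.
   Context: An $R$-module $M$ is a comultiplication module if for every submodule $N$ of $M$ there is an ideal $I$ of $R$ with $N=\mathrm{Ann}_M(I)$. A submodule $N$ of $M$ is large if $N\cap L\neq 0$ for every non-zero submodule $L$ of $M$. $\mathrm{Min}(M)$ is the set of minimal submodules of $M$. The large sum graph $G'(M)$ has as vertex set the set of all non-zero non-large submodules of $M$, and two distinct vertices $N,K$ are adjacent iff $N+K$ is non-large in $M$. A star graph is a complete bipartite graph $K_{1,n}$ (one part of size 1). *)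

(* Equality of subsets is Leibniz equality. *)
From HB Require Import structures.
From mathcomp Require Import all_boot all_order all_algebra.
Set Implicit Arguments. Unset Strict Implicit. Unset Printing Implicit Defensive.
Import GRing.Theory.
Local Open Scope ring_scope.

Section ComultGraph.
Variables (R : comNzRingType) (M : lmodType R).

Definition is_submodule (N : M -> Prop) : Prop :=
  N 0 /\ (forall (a : R) (x y : M), N x -> N y -> N (a *: x + y)).

Definition is_ideal (I : R -> Prop) : Prop :=
  I 0 /\ (forall x y, I x -> I y -> I (x - y)) /\ (forall r x, I x -> I (r * x)).

Definition annM (I : R -> Prop) : M -> Prop := fun m => forall r, I r -> r *: m = 0.

Definition comultiplication_module : Prop :=
  forall N : M -> Prop, is_submodule N -> exists I, is_ideal I /\ N = annM I.

Definition nonzero_sub (N : M -> Prop) : Prop := exists x, N x /\ x <> 0.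

Definition large (N : M -> Prop) : Prop :=
  forall L : M -> Prop, is_submodule L -> nonzero_sub L -> exists x, x <> 0 /\ N x /\ L x.

Definition subsum (N K : M -> Prop) : M -> Prop :=
  fun x => exists a b, N a /\ K b /\ x = a + b.

Definition vertex (N : M -> Prop) : Prop :=
  is_submodule N /\ nonzero_sub N /\ ~ large N.

Definition adj (N K : M -> Prop) : Prop :=
  vertex N /\ vertex K /\ N <> K /\ ~ large (subsum N K).

Definition non_null : Prop := exists N K, adj N K.

Definition minimal_sub (N : M -> Prop) : Prop :=
  is_submodule N /\ nonzero_sub N /\
  (forall L : M -> Prop, is_submodule L -> nonzero_sub L -> (forall x, L x -> N x) -> L = N).

Definition two_minimal : Prop :=
  exists N1 N2, N1 <> N2 /\ minimal_sub N1 /\ minimal_sub N2 /\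
    (forall N, minimal_sub N -> N = N1 \/ N = N2).

Definition has_pendent_vertex : Prop :=
  exists v, vertex v /\ exists u, adj v u /\ (forall w, adj v w -> w = u).

Definition complete_on (A : (M -> Prop) -> Prop) : Prop :=
  forall N K, A N -> A K -> N <> K -> adj N K.

Definition has_exactly_two (A : (M -> Prop) -> Prop) : Prop :=
  exists N1 N2, N1 <> N2 /\ (forall N, A N <-> N = N1 \/ N = N2).

Definition two_complete_components : Prop :=
  exists A B : (M -> Prop) -> Prop,
    (forall N, vertex N <-> A N \/ B N) /\
    (forall N, ~ (A N /\ B N)) /\
    (exists N, A N) /\ (exists N, B N) /\
    complete_on A /\ complete_on B /\
    (forall N K, A N -> B K -> ~ adj N K) /\
    (has_exactly_two A \/ has_exactly_two B).

Definition star_graph : Prop :=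
  exists c, vertex c /\ (forall N, vertex N -> N <> c -> adj c N) /\
    (forall N K, adj N K -> N = c \/ K = c).

End ComultGraph.

(* A non-large submodule N has a non-zero complement L with N ∩ L = 0, which is
   again a vertex.  In a star with centre c, the vertex c + L is then adjacent
   to L, giving an edge that avoids c.

   Of a pendent vertex and its only neighbour, one, S, is properly contained in
   the other, T, and the uniqueness of the neighbour makes S the only non-zero
   proper submodule of T and T the only non-large proper overmodule of S.  In a
   comultiplication module every x outside a submodule N is separated from N by
   a scalar annihilating N.  With this, the vertices other than S and T meet S
   trivially, so do their sums, which are therefore non-large: these vertices
   form a complete graph, with no edge to S or T.  The minimal submodules are S
   and a minimal submodule inside a complement of T (minimal submodules exist
   in every non-zero cyclic submodule, using a maximal ideal over Ann(x)); any
   other minimal submodule would meet one of these two non-trivially. *)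
From HB Require Import structures.
From mathcomp Require Import all_boot all_order all_algebra.
From mathcomp Require Import ring classical_sets.
From Stdlib Require Import Classical.
Import GRing.Theory.
Set Implicit Arguments. Unset Strict Implicit. Unset Printing Implicit Defensive.
Local Open Scope ring_scope.
Local Open Scope classical_set_scope.

Section MaximalIdeal.
Variable R : comNzRingType.
Implicit Types I J A B : set R.

(* The last clause says [I + J `<=` J] without forcing [J 0], so that the
   empty set, the union of the empty chain, is admissible in Zorn's lemma. *)
Definition proper_ideal_over I J :=
  [/\ forall a b, J a -> J b -> J (a + b), forall r a, J a -> J (r * a), ~ J 1
    & forall a b, I a -> J b -> J (a + b)].

Lemma exists_maximal_proper_ideal_over I :
  exists A, proper_ideal_over I A /\ forall B, A `<` B -> ~ proper_ideal_over I B.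
Proof.
apply: Zorn_bigcup => F FP Ftot; split.
- move=> a b [J FJ Ja] [J' FJ' J'b].
  have [JJ'|J'J] := Ftot _ _ FJ FJ'.
  + by exists J' => //; have [+ _ _ _] := FP _ FJ'; apply => //; apply: JJ'.
  + by exists J => //; have [+ _ _ _] := FP _ FJ; apply => //; apply: J'J.
- by move=> r a [J FJ Ja]; exists J => //; have [_ + _ _] := FP _ FJ; apply.
- by move=> [J FJ J1]; have [_ _ + _] := FP _ FJ.
- by move=> a b Ia [J FJ Jb]; exists J => //; have [_ _ _ +] := FP _ FJ; apply.
Qed.

Lemma maximal_ideal_over I : proper_ideal_over I I -> I 0 ->
  exists A, [/\ I `<=` A, proper_ideal_over I A
              & forall c, ~ A c -> exists d, A (d * c - 1)].
Proof.
move=> PI I0; have [A [PA Amax]] := exists_maximal_proper_ideal_over I.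
have [Aadd Amul A1 IA] := PA.
have [a0 Aa0] : exists a, A a.
  apply: NNPP => A0; apply: (Amax I) PI; split.
    by move=> a Aa; case: A0; exists a.
  by move=> /(_ 0 I0) A0'; apply: A0; exists 0.
have A0 : A 0 by rewrite -(mul0r a0); apply: Amul.
have IsubA : I `<=` A by move=> a Ia; rewrite -(addr0 a); apply: IA.
exists A; split => // c Ac.
pose B z := exists a d, A a /\ z = a + d * c.
have AB : A `<` B.
  split; first by move=> a Aa; exists a, 0; rewrite mul0r addr0.
  by move=> BA; apply: Ac; apply: BA; exists 0, 1; rewrite mul1r add0r.
have [a [d [Aa e1]]] : B 1.
  apply: NNPP => B1; apply: (Amax B AB); split => //.
  - move=> _ _ [a1 [d1 [Aa1 ->]]] [a2 [d2 [Aa2 ->]]].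
    by exists (a1 + a2), (d1 + d2); split; [apply: Aadd | ring].
  - by move=> r _ [a [d [Aa ->]]]; exists (r * a), (r * d); split; [apply: Amul | ring].
  - by move=> x _ Ix [a [d [Aa ->]]]; exists (x + a), d; split; [apply: IA | ring].
exists d; have -> : d * c - 1 = - 1 * a by rewrite [in LHS]e1; ring.
exact: Amul.
Qed.

End MaximalIdeal.

Section Submodules.
Variables (R : comNzRingType) (M : lmodType R).
Implicit Types (N K L X Y : set M) (x y z : M).

Definition cyclic_sub x : set M := fun z => exists c, z = c *: x.
Definition trivial_meet N K := forall z, N z -> K z -> z = 0.
Definition annihilates (r : R) N := forall z, N z -> r *: z = 0.

Lemma submod0 N : is_submodule N -> N 0.
Proof. by case. Qed.

Lemma submodD N x y : is_submodule N -> N x -> N y -> N (x + y).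
Proof. by move=> [_ h] Nx Ny; rewrite -(scale1r x); apply: h. Qed.

Lemma submodZ N a x : is_submodule N -> N x -> N (a *: x).
Proof. by move=> [N0 h] Nx; rewrite -(addr0 (a *: x)); apply: h. Qed.

Lemma submodN N x : is_submodule N -> N x -> N (- x).
Proof. by move=> subN Nx; rewrite -scaleN1r; apply: submodZ. Qed.

Lemma submodB N x y : is_submodule N -> N x -> N y -> N (x - y).
Proof. by move=> subN Nx Ny; apply: submodD => //; apply: submodN. Qed.

Lemma submodI N K : is_submodule N -> is_submodule K -> is_submodule (N `&` K).
Proof.
move=> [N0 subN] [K0 subK]; split=> // a x y [Nx Kx] [Ny Ky].
by split; [apply: subN | apply: subK].
Qed.

Lemma submod_cyclic x : is_submodule (cyclic_sub x).
Proof.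
split; first by exists 0; rewrite scale0r.
by move=> a _ _ [c1 ->] [c2 ->]; exists (a * c1 + c2); rewrite scalerDl scalerA.
Qed.

Lemma cyclic_sub_id x : cyclic_sub x x.
Proof. by exists 1; rewrite scale1r. Qed.

Lemma cyclic_sub_min N x : is_submodule N -> N x -> cyclic_sub x `<=` N.
Proof. by move=> subN Nx _ [c ->]; apply: submodZ. Qed.

Lemma nonzero_cyclic x : x <> 0 -> nonzero_sub (cyclic_sub x).
Proof. by move=> x0; exists x; split=> //; apply: cyclic_sub_id. Qed.

Lemma submod_subsum N K : is_submodule N -> is_submodule K -> is_submodule (subsum N K).
Proof.
move=> subN subK; split.
  by exists 0, 0; rewrite addr0; split; [apply: submod0 | split=> //; apply: submod0].
move=> a _ _ [n1 [k1 [Nn1 [Kk1 ->]]]] [n2 [k2 [Nn2 [Kk2 ->]]]].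
exists (a *: n1 + n2), (a *: k1 + k2); split; first by case: subN => _; apply.
by split; [case: subK => _; apply | rewrite scalerDr addrACA].
Qed.

Lemma subsumC N K : subsum N K = subsum K N.
Proof.
by apply/seteqP; split=> _ [a [b [Na [Kb ->]]]]; exists b, a; rewrite addrC.
Qed.

Lemma subsum_l N K : is_submodule K -> N `<=` subsum N K.
Proof. by move=> subK x Nx; exists x, 0; rewrite addr0; split=> //; split=> //; apply: submod0. Qed.

Lemma subsum_r N K : is_submodule N -> K `<=` subsum N K.
Proof. by move=> subN x Kx; rewrite subsumC; apply: subsum_l. Qed.

Lemma subsum_idr N K : is_submodule N -> is_submodule K -> N `<=` K -> subsum N K = K.
Proof.
move=> subN subK NK; apply/seteqP; split; last exact: subsum_r.
by move=> _ [n [k [Nn [Kk ->]]]]; apply: submodD => //; apply: NK.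
Qed.

Lemma large_sub N K : large N -> N `<=` K -> large K.
Proof.
move=> lN NK L subL nzL; have [x [x0 [Nx Lx]]] := lN L subL nzL.
by exists x; split=> //; split=> //; apply: NK.
Qed.

Lemma non_large_sub N K : ~ large K -> N `<=` K -> ~ large N.
Proof. by move=> nlK NK lN; apply: nlK; apply: large_sub NK. Qed.

Lemma non_large_complement N :
  ~ large N -> exists L, [/\ is_submodule L, nonzero_sub L & trivial_meet L N].
Proof.
move=> nlN; apply: NNPP => noL; apply: nlN => L subL nzL.
apply: NNPP => noz; apply: noL; exists L; split=> // z Lz Nz.
by apply: NNPP => z0; apply: noz; exists z.
Qed.

Lemma trivial_meet_non_large L K :
  is_submodule K -> nonzero_sub K -> trivial_meet L K -> ~ large L.
Proof.
by move=> subK nzK LK lL; have [x [x0 [Lx Kx]]] := lL K subK nzK; apply: x0; apply: LK.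
Qed.

Lemma complement_vertex L N :
  is_submodule L -> nonzero_sub L -> is_submodule N -> nonzero_sub N ->
  trivial_meet L N -> vertex L.
Proof. by move=> subL nzL subN nzN LN; do 2!split=> //; apply: trivial_meet_non_large LN. Qed.

Lemma vertex_sub N K : vertex K -> is_submodule N -> nonzero_sub N -> N `<=` K -> vertex N.
Proof. by move=> [_ [_ nlK]] subN nzN NK; do 2!split=> //; apply: non_large_sub NK. Qed.

Lemma adj_sym N K : adj N K -> adj K N.
Proof. by move=> [vN [vK [NK nl]]]; do 3!split=> //; [move/esym | rewrite subsumC]. Qed.

Lemma adj_proper N K : vertex N -> vertex K -> N `<=` K -> N <> K -> adj N K.
Proof.
move=> vN vK NK NneK; have [subN _] := vN; have [subK [_ nlK]] := vK.
by do 3!split=> //; rewrite subsum_idr.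
Qed.

Lemma minimal_cyclic S s : minimal_sub S -> S s -> s <> 0 -> cyclic_sub s = S.
Proof.
move=> [subS [_ minS]] Ss s0.
by apply: minS; [apply: submod_cyclic | apply: nonzero_cyclic | apply: cyclic_sub_min].
Qed.

Lemma minimal_subP S X : minimal_sub S -> is_submodule X ->
  S `<=` X \/ trivial_meet X S.
Proof.
move=> minS subX; have [SX|nSX] := classic (S `<=` X); [by left | right].
move=> z Xz Sz; apply: NNPP => z0; apply: nSX.
by rewrite -(minimal_cyclic minS Sz z0); apply: cyclic_sub_min.
Qed.

Lemma minimal_annihilates S s a : minimal_sub S -> S s -> s <> 0 -> a *: s = 0 ->
  annihilates a S.
Proof.
move=> minS Ss s0 as0 z; rewrite -(minimal_cyclic minS Ss s0) => -[c ->].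
by rewrite scalerA mulrC -scalerA as0 scaler0.
Qed.

Lemma minimal_sub_eq S S' : minimal_sub S -> minimal_sub S' ->
  (exists z, [/\ z <> 0, S z & S' z]) -> S = S'.
Proof.
move=> [subS [_ minS]] [subS' [_ minS']] [z [z0 Sz S'z]].
have subSS' := submodI subS subS'; have nzSS' : nonzero_sub (S `&` S') by exists z.
by rewrite -(minS _ subSS' nzSS' (@subIsetl _ _ _)) (minS' _ subSS' nzSS' (@subIsetr _ _ _)).
Qed.

Definition only_nonzero_subs S T :=
  forall X, is_submodule X -> nonzero_sub X -> X `<=` T -> X = S \/ X = T.

Definition only_non_large_supers S T :=
  forall X, is_submodule X -> ~ large X -> S `<=` X -> X = S \/ X = T.

Lemma only_nonzero_subs_minimal S T : is_submodule S -> nonzero_sub S -> S `<=` T ->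
  S <> T -> only_nonzero_subs S T -> minimal_sub S.
Proof.
move=> subS nzS ST SneT subsT; split=> //; split=> // Y subY nzY YS.
have [//|YT] := subsT Y subY nzY (subset_trans YS ST).
by case: SneT; apply/seteqP; split=> //; rewrite -YT.
Qed.

End Submodules.

Section Comultiplication.
Variables (R : comNzRingType) (M : lmodType R).
Implicit Types (N K L X Y : set M) (x y z : M).
Hypothesis comult : comultiplication_module M.

Lemma comult_separation N x : is_submodule N -> ~ N x ->
  exists r, annihilates r N /\ r *: x <> 0.
Proof.
move=> subN Nx; have [I [_ eN]] := comult subN.
rewrite eN in Nx; apply: NNPP => nor; apply: Nx => r Ir.
apply: NNPP => rx; apply: nor; exists r; split=> // z.
by rewrite eN => /(_ r Ir).
Qed.

(* If [A] is a maximal ideal over [Ann(x)], then [A x] is a submodule missing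
   [x], and a scalar [r] separating them gives an element [r x] annihilated
   by [A]; the cyclic submodule it generates is simple because [R/A] is a field. *)
Lemma exists_minimal_in_cyclic x : x <> 0 ->
  exists S, minimal_sub S /\ S `<=` cyclic_sub x.
Proof.
move=> x0; pose I (r : R) := r *: x = 0.
have PI : proper_ideal_over I I.
  have Iadd a b : I a -> I b -> I (a + b) by rewrite /I scalerDl => -> ->; rewrite addr0.
  split=> // [r a|]; first by rewrite /I -scalerA => ->; rewrite scaler0.
  by rewrite /I scale1r.
have [A [IA [Aadd Amul A1 _] Aunit]] := maximal_ideal_over PI (scale0r x).
pose N z := exists2 a, A a & z = a *: x.
have subN : is_submodule N.
  split; first by exists 0; [apply: IA; apply: scale0r | rewrite scale0r].
  move=> b _ _ [a1 Aa1 ->] [a2 Aa2 ->]; exists (b * a1 + a2).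
    by apply: Aadd => //; apply: Amul.
  by rewrite scalerDl scalerA.
have Nx : ~ N x.
  move=> [a Aa ex]; apply: A1; rewrite -(subrK a 1); apply: Aadd => //.
  by apply: IA; rewrite /I scalerBl scale1r -ex subrr.
have [r [rN rx0]] := comult_separation subN Nx.
have Ary : forall c, A c -> c *: (r *: x) = 0.
  by move=> c Ac; rewrite scalerA mulrC -scalerA; apply: rN; exists c.
exists (cyclic_sub (r *: x)); split; last first.
  by move=> _ [e ->]; exists (e * r); rewrite scalerA.
split; first exact: submod_cyclic.
split; first exact: nonzero_cyclic.
move=> L subL [z [Lz z0]] Lrx; apply/seteqP; split=> //.
apply: cyclic_sub_min => //; have [c ez] := Lrx z Lz.
have [d Adc] : exists d, A (d * c - 1).
  by apply: Aunit => Ac; apply: z0; rewrite ez; apply: Ary.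
have -> : r *: x = d *: z - (d * c - 1) *: (r *: x).
  by rewrite ez scalerA -scalerBl (_ : d * c - (d * c - 1) = 1) ?scale1r //; ring.
by rewrite (Ary _ Adc) subr0; apply: submodZ.
Qed.

(* An element of [S] outside [X + Y] would be separated first from [X], then
   from [Y], by scalars whose product kills [X + Y]. *)
Lemma trivial_meetD S X Y : is_submodule S -> is_submodule X -> is_submodule Y ->
  trivial_meet X S -> trivial_meet Y S -> trivial_meet (subsum X Y) S.
Proof.
move=> subS subX subY XS YS _ [x [y [Xx [Yy ->]]]] Sxy.
apply: NNPP => xy0.
have [b [bX bxy0]] : exists b, annihilates b X /\ b *: (x + y) <> 0.
  by apply: comult_separation => // Xxy; apply: xy0; apply: XS.
have [b' [b'Y b'bxy0]] : exists b', annihilates b' Y /\ b' *: (b *: (x + y)) <> 0.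
  by apply: comult_separation => // Ybxy; apply: bxy0; apply: YS => //; apply: submodZ.
apply: b'bxy0; rewrite scalerDr (bX x Xx) add0r scalerA mulrC -scalerA (b'Y y Yy).
exact: scaler0.
Qed.

End Comultiplication.

Section PendantPair.
Variables (R : comNzRingType) (M : lmodType R).
Implicit Types (N K X Y : set M) (x y z : M).
Hypothesis comult : comultiplication_module M.
Variables S T : set M.
Hypotheses (subS : is_submodule S) (S_nz : nonzero_sub S) (vT : vertex T).
Hypotheses (ST : S `<=` T) (S_neq_T : S <> T).
Hypotheses (subsT : only_nonzero_subs S T) (supsS : only_non_large_supers S T).

Let subT : is_submodule T. Proof. by case: vT. Qed.
Let nlT : ~ large T. Proof. by case: vT => _ []. Qed.
Let minS : minimal_sub S := only_nonzero_subs_minimal subS S_nz ST S_neq_T subsT.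

Let T_nz : nonzero_sub T.
Proof. by have [s [Ss s0]] := S_nz; exists s; split=> //; apply: ST. Qed.

Lemma pair_vertex : vertex S.
Proof. by apply: vertex_sub vT subS S_nz ST. Qed.

Lemma pair_other_trivial_meet X : vertex X -> X <> S -> X <> T -> trivial_meet X S.
Proof.
move=> [subX [_ nlX]] XneS XneT.
by have [/(supsS subX nlX) [] //|] := minimal_subP minS subX.
Qed.

Lemma pair_large_sum X : is_submodule X -> nonzero_sub X -> trivial_meet X S ->
  large (subsum X S).
Proof.
move=> subX nzX XS; apply: NNPP => nlXS.
have XT : X `<=` T.
  have [e|e] := supsS (submod_subsum subX subS) nlXS (subsum_r subX);
    [apply: (subset_trans _ ST) |]; rewrite -e; exact: subsum_l.
have [s [Ss s0]] := S_nz.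
by have [e|e] := subsT subX nzX XT; apply: s0; apply: XS => //; rewrite e //; apply: ST.
Qed.

(* [X + S] meets [Y] in some [x + s]; a scalar killing [X] but not [s] would
   push [x + s] to a non-zero element of [S `&` Y], so [s = 0]. *)
Lemma pair_meet X Y : is_submodule X -> is_submodule Y -> nonzero_sub X -> nonzero_sub Y ->
  trivial_meet X S -> trivial_meet Y S -> exists z, [/\ z <> 0, X z & Y z].
Proof.
move=> subX subY nzX nzY XS YS.
have [z [z0 [[x [s [Xx [Ss ez]]]] Yz]]] := pair_large_sum subX nzX XS subY nzY.
have [s0|s0] := classic (s = 0); first by exists z; rewrite ez s0 addr0 in z0 Yz *.
have [b [bX bs0]] := comult_separation comult subX (fun Xs => s0 (XS s Xs Ss)).
case: bs0; apply: YS; last exact: submodZ.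
by rewrite -[b *: s]add0r -(bX x Xx) -scalerDr -ez; apply: submodZ.
Qed.

Lemma pair_no_cross N K : N = S \/ N = T -> vertex K -> K <> S -> K <> T -> ~ adj N K.
Proof.
move=> NST [subK [nzK _]] KneS KneT [[subN _] [_ [_ nlNK]]].
have SNK : S `<=` subsum N K.
  by case: NST => ->; [|apply: (subset_trans ST)]; apply: subsum_l.
have KT : K `<=` T.
  have [e|e] := supsS (submod_subsum subN subK) nlNK SNK;
    [apply: (subset_trans _ ST) |]; rewrite -e; exact: subsum_r.
by have [] := subsT subK nzK KT.
Qed.

Lemma pair_two_minimal : two_minimal M.
Proof.
have [L [subL [x [Lx x0]] LT]] := non_large_complement nlT.
have [S' [minS' S'x]] := exists_minimal_in_cyclic comult x0.
have S'S : trivial_meet S' S.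
  by move=> z /S'x /(cyclic_sub_min subL Lx) Lz /ST; apply: LT.
have [subS' [nzS' _]] := minS'; have [s' [S's' s'0]] := nzS'.
exists S, S'; split.
  by move=> e; apply: s'0; apply: S'S => //; rewrite e.
split=> //; split=> // N minN; have [subN [nzN _]] := minN.
have [SN|NS] := minimal_subP minS subN.
  left; apply/esym/minimal_sub_eq => //; have [s [Ss s0]] := S_nz.
  by exists s; split=> //; apply: SN.
by right; apply: minimal_sub_eq => //; apply: pair_meet.
Qed.

Lemma pair_components : two_complete_components M.
Proof.
have vS := pair_vertex.
have [L [subL nzL LT]] := non_large_complement nlT.
have [s [Ss s0]] := S_nz.
have LS : trivial_meet L S by move=> z Lz /ST; apply: LT.
exists (fun N => N = S \/ N = T), (fun N => [/\ vertex N, N <> S & N <> T]).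
split.
  move=> N; split=> [vN|[[->|->]|[]] //].
  by have [->|NneS] := classic (N = S); [left; left|
     have [->|NneT] := classic (N = T); [left; right|right]].
split; first by move=> N [[->|->] [_]].
split; first by exists S; left.
split.
  exists L; split; first exact: (complement_vertex subL nzL subT T_nz LT).
  - by move=> e; apply: s0; apply: LS => //; rewrite e.
  - by move=> e; apply: s0; apply: LT; [rewrite e|]; apply: ST.
split.
  by move=> N K [->|->] [->|->] NK //; [|apply: adj_sym]; apply: adj_proper.
split.
  move=> N K [vN NneS NneT] [vK KneS KneT] NneK; do 3!split=> //.
  apply: (trivial_meet_non_large subS S_nz); have [subN _] := vN; have [subK _] := vK.
  by apply: trivial_meetD => //; apply: pair_other_trivial_meet.
split; first by move=> N K NST [vK KneS KneT]; apply: pair_no_cross.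
by left; exists S, T.
Qed.

End PendantPair.

Section PendantBelow.
Variables (R : comNzRingType) (M : lmodType R).
Implicit Types (X Y : set M).
Variables S T : set M.
Hypotheses (vS : vertex S) (vT : vertex T) (ST : S `<=` T) (S_neq_T : S <> T).
Hypothesis S_pendent : forall X, adj S X -> X = T.

Lemma below_supers : only_non_large_supers S T.
Proof.
move=> X subX nlX SX; have [->|XneS] := classic (X = S); [by left | right].
have [_ [[s [Ss s0]] _]] := vS.
have vX : vertex X by split=> //; split=> //; exists s; split=> //; apply: SX.
by apply: S_pendent; apply: adj_proper => // e; apply: XneS.
Qed.

Lemma below_minimal : minimal_sub S.
Proof.
have [subS [nzS _]] := vS; split=> //; split=> // Y subY nzY YS.
apply: NNPP => YneS; apply: S_neq_T; apply/seteqP; split=> //.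
have vY := vertex_sub vS subY nzY YS.
by rewrite -(S_pendent (adj_sym (adj_proper vY vS YS YneS))).
Qed.

(* A complement [L] of [T] gives a large [L + S]; a non-zero [X `<=` T]
   meeting [S] trivially would meet [L + S] in some [l + s] with [l = 0]. *)
Lemma below_subs : only_nonzero_subs S T.
Proof.
move=> X subX nzX XT; have [subS [nzS _]] := vS; have [subT [_ nlT]] := vT.
have nlX := non_large_sub nlT XT.
have [SX|XS] := minimal_subP below_minimal subX; first exact: below_supers.
have [L [subL nzL LT]] := non_large_complement nlT.
have lLS : large (subsum L S).
  apply: NNPP => nlLS; have [z [Lz z0]] := nzL; apply: z0; apply: LT => //.
  have [e|e] := below_supers (submod_subsum subL subS) nlLS (subsum_r subL);
    [apply: ST|]; rewrite -e; exact: subsum_l.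
have [x [x0 [[l [s [Ll [Ss ex]]]] Xx]]] := lLS X subX nzX.
have l0 : l = 0.
  apply: LT => //; rewrite (_ : l = x - s); last by rewrite ex addrK.
  by apply: submodB => //; [apply: XT | apply: ST].
by case: x0; apply: XS => //; rewrite ex l0 add0r.
Qed.

End PendantBelow.

Section PendantAbove.
Variables (R : comNzRingType) (M : lmodType R).
Implicit Types (X Y : set M).
Hypothesis comult : comultiplication_module M.
Variables S T : set M.
Hypotheses (vS : vertex S) (vT : vertex T) (ST : S `<=` T) (S_neq_T : S <> T).
Hypothesis T_pendent : forall X, adj T X -> X = S.

Let subS : is_submodule S. Proof. by case: vS. Qed.
Let subT : is_submodule T. Proof. by case: vT. Qed.
Let S_nz : nonzero_sub S. Proof. by case: vS => _ []. Qed.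

Lemma above_subs : only_nonzero_subs S T.
Proof.
move=> X subX nzX XT; have [->|XneT] := classic (X = T); [by right | left].
have vX := vertex_sub vT subX nzX XT.
exact: T_pendent (adj_sym (adj_proper vX vT XT XneT)).
Qed.

Let minS : minimal_sub S := only_nonzero_subs_minimal subS S_nz ST S_neq_T above_subs.

Lemma above_supers_T X : is_submodule X -> ~ large X -> T `<=` X -> X = T.
Proof.
move=> subX nlX TX; apply: NNPP => XneT; apply: S_neq_T.
have [s [Ss s0]] := S_nz.
have vX : vertex X by split=> //; split=> //; exists s; split=> //; apply/TX/ST.
have XS := T_pendent (adj_proper vT vX TX (fun e => XneT (esym e))).
by apply/seteqP; split=> //; rewrite -XS.
Qed.

(* If [a t] were outside [S], it would generate [T], so [t] and every [s] in
   [S] would be multiples of [a t]; then [s = d (a s) = 0]. *)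
Lemma above_annihilator a t : annihilates a S -> T t -> S (a *: t).
Proof.
move=> aS Tt; apply: NNPP => Sat.
have at0 : a *: t <> 0 by move=> e; apply: Sat; rewrite e; apply: submod0.
have [s [Ss s0]] := S_nz.
have [e|e] := above_subs (submod_cyclic (a *: t)) (nonzero_cyclic at0)
  (cyclic_sub_min subT (submodZ a subT Tt)).
  by apply: Sat; rewrite -e; apply: cyclic_sub_id.
have [c es] : cyclic_sub (a *: t) s by rewrite e; apply: ST.
have [d et] : cyclic_sub (a *: t) t by rewrite e.
apply: s0; have -> : s = d *: (a *: s).
  by rewrite {1}es {1}et !scalerA es !scalerA; congr (_ *: _); ring.
by rewrite (aS s Ss) scaler0.
Qed.

Lemma above_cap Y : is_submodule Y -> S `<=` Y -> ~ T `<=` Y -> Y `&` T `<=` S.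
Proof.
move=> subY SY TY; have [s [Ss s0]] := S_nz.
have nzYT : nonzero_sub (Y `&` T) by exists s; split=> //; split; [apply: SY | apply: ST].
have [->|e] := above_subs (submodI subY subT) nzYT (@subIsetr _ _ _) => //.
by case: TY => z Tz; have [] : (Y `&` T) z by rewrite e.
Qed.

Lemma above_large_sum Y : is_submodule Y -> ~ large Y -> S `<=` Y -> Y <> S -> Y <> T ->
  large (subsum Y T).
Proof.
move=> subY nlY SY YneS YneT; apply: NNPP => nlYT.
have e := above_supers_T (submod_subsum subY subT) nlYT (subsum_r subY).
have [s [Ss s0]] := S_nz.
have nzY : nonzero_sub Y by exists s; split=> //; apply: SY.
have YT : Y `<=` T by rewrite -e; apply: subsum_l.
by have [] := above_subs subY nzY YT.
Qed.

(* A complement [K] of [Y] meets [Y + T] in some [y + t]; a scalar [b] killing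
   [K] puts [b t] into [Y `&` T `<=` S], and since [S] is simple this forces
   [t] itself into [S], hence [y + t] into [Y]. *)
Lemma above_supers : only_non_large_supers S T.
Proof.
move=> Y subY nlY SY; apply: NNPP => YneST.
have TY : ~ T `<=` Y by move=> TY; apply: YneST; right; apply: above_supers_T.
have lYT : large (subsum Y T).
  by apply: above_large_sum => // e; apply: YneST; [left | right].
have [K [subK nzK KY]] := non_large_complement nlY.
have [k [k0 [[y [t [Yy [Tt ek]]]] Kk]]] := lYT K subK nzK.
have [s [Ss s0]] := S_nz.
have [b [bK bs0]] := comult_separation comult subK (fun Ks => s0 (KY s Ks (SY s Ss))).
have Sbt : S (b *: t).
  apply: (above_cap subY SY TY); split; last exact: submodZ.
  rewrite (_ : b *: t = - (b *: y)); first by apply: submodN => //; apply: submodZ.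
  by apply/eqP; rewrite -addr_eq0 addrC -scalerDr -ek (bK k Kk).
have [c ec] : cyclic_sub (b *: s) s.
  by rewrite (minimal_cyclic minS (submodZ b subS Ss) bs0).
have aS : annihilates (c * b - 1) S.
  by apply: (minimal_annihilates minS Ss s0); rewrite scalerBl scale1r -scalerA -ec subrr.
have St : S t.
  rewrite (_ : t = c *: (b *: t) - (c * b - 1) *: t); last first.
    by rewrite scalerA -scalerBl (_ : c * b - (c * b - 1) = 1) ?scale1r //; ring.
  by apply: submodB => //; [apply: submodZ | apply: above_annihilator].
by apply: k0; apply: KY => //; rewrite ek; apply: submodD => //; apply: SY.
Qed.

End PendantAbove.

Section Graph.
Variables (R : comNzRingType) (M : lmodType R).
Implicit Types (A : set (set M)) (N K L : set M).

Lemma not_star_graph : ~ star_graph M.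
Proof.
move=> [c [vc [c_adj c_edges]]]; have [subc [nzc nlc]] := vc.
have [L [subL nzL Lc]] := non_large_complement nlc.
have vL := complement_vertex subL nzL subc nzc Lc.
have [x [Lx x0]] := nzL; have [w [cw w0]] := nzc.
have LneC : L <> c by move=> e; apply: x0; apply: Lc => //; rewrite -e.
have [_ [_ [_ nlcL]]] := c_adj L vL LneC.
have subcL := submod_subsum subc subL.
have cLneC : subsum c L <> c.
  by move=> e; apply: x0; apply: Lc => //; rewrite -e; apply: subsum_r.
have cLneL : subsum c L <> L.
  by move=> e; apply: w0; apply: Lc => //; rewrite -e; apply: subsum_l.
have vcL : vertex (subsum c L).
  by split=> //; split=> //; exists x; split=> //; apply: subsum_r.
have := c_edges _ _ (adj_proper vL vcL (subsum_r subc) (fun e => cLneL (esym e))).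
by case.
Qed.

Lemma exactly_two_closed_pendent A : (forall N, A N -> vertex N) -> complete_on A ->
  has_exactly_two A -> (forall N K, A N -> adj N K -> A K) -> has_pendent_vertex M.
Proof.
move=> AV cA [N1 [N2 [N12 AN]]] A_closed.
have AN1 : A N1 by apply/AN; left.
have AN2 : A N2 by apply/AN; right.
exists N1; split; first exact: AV.
exists N2; split; first exact: cA.
move=> K N1K; have [_ [_ [N1neK _]]] := N1K.
by have [e|] := (AN K).1 (A_closed _ _ AN1 N1K); first by case: N1neK.
Qed.

Lemma two_complete_components_pendent :
  two_complete_components M -> has_pendent_vertex M.
Proof.
move=> [A [B [AB_vertex [_ [_ [_ [cA [cB [AB_no_edge two]]]]]]]]].
have AV N : A N -> vertex N by move=> AN; apply/AB_vertex; left.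
have BV N : B N -> vertex N by move=> BN; apply/AB_vertex; right.
case: two => [twoA|twoB].
  apply: (exactly_two_closed_pendent AV cA twoA) => N K AN NK.
  have [_ [vK _]] := NK.
  by have [//|BK] := (AB_vertex K).1 vK; case: (AB_no_edge N K).
apply: (exactly_two_closed_pendent BV cB twoB) => N K BN NK.
have [_ [vK _]] := NK.
by have [AK|//] := (AB_vertex K).1 vK; case: (AB_no_edge K N) => //; apply: adj_sym.
Qed.

(* Of a pendent vertex and its neighbour, one contains the other: otherwise
   their sum would be a second neighbour. *)
Lemma pendent_vertex_structure : comultiplication_module M ->
  has_pendent_vertex M -> two_minimal M /\ two_complete_components M.
Proof.
move=> comult [v [vv [u [vu v_pendent]]]]; have [_ [vu' [vneu nlvu]]] := vu.
have [subv [nzv _]] := vv; have [subu _] := vu'.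
suff : exists S T : set M, [/\ vertex S, vertex T, S `<=` T & S <> T] /\
    only_nonzero_subs S T /\ only_non_large_supers S T.
  move=> [S [T [[vS vT ST SneT] [subsT supsS]]]].
  have [subS [nzS _]] := vS.
  split; [exact: (pair_two_minimal comult subS nzS vT ST SneT subsT supsS)
        | exact: (pair_components comult subS nzS vT ST SneT subsT supsS)].
have [uv|nuv] := classic (u `<=` v).
  have uneV : u <> v by move=> e; apply: vneu.
  by exists u, v; split; [|split; [apply: above_subs | apply: above_supers]].
have vW : vertex (subsum v u).
  split; first exact: submod_subsum.
  by split=> //; have [x [vx x0]] := nzv; exists x; split=> //; apply: subsum_l.
have vuu : subsum v u = u.
  apply/v_pendent/(adj_proper vv vW (subsum_l subu)) => e.
  by apply: nuv; rewrite e; apply: subsum_r.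
have vu_sub : v `<=` u by rewrite -vuu; apply: subsum_l.
by exists v, u; split; [|split; [apply: below_subs | apply: below_supers]].
Qed.

End Graph.

Theorem theorem2p12 (R : comNzRingType) (M : lmodType R) :
  comultiplication_module M ->
  (exists x : M, x <> 0) ->
  non_null M ->
  (has_pendent_vertex M <-> (two_minimal M /\ two_complete_components M)) /\
  ~ star_graph M.
Proof.
move=> comult _ _; split; last exact: not_star_graph.
split; first exact: pendent_vertex_structure.
by move=> [_]; apply: two_complete_components_pendent.
Qed.
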